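(* Let $X$ be a finite set and let $\tau$ be a non-empty subset of $\binom{X}{2}$. Then $\tau$ is thin (i.e. $|L(\tau')|\ge|\tau'|+1$ for every non-empty $\tau'\subseteq\tau$) if and only if $\tau$ is total-order flexible.
   Context: $L(\tau)=\bigcup_{s\in\tau}s$. A non-empty $\tau\subseteq\binom{X}{2}$ is total-order flexible if for every choice, for each $\{x,y\}\in\tau$, of one of $x\prec y$ or $y\prec x$, there exists a total order on $X$ agreeing with all chosen relations. *)

From mathcomp Require Import all_boot.
Set Implicit Arguments. Unset Strict Implicit. Unset Printing Implicit Defensive.

Section Defs.
Variable X : finType.

Definition L (tau : {set {set X}}) : {set X} := \bigcup_(s in tau) s.

Definition pairs (tau : {set {set X}}) : Prop := forall s, s \in tau -> #|s| = 2.

Definition thin (tau : {set {set X}}) : Prop :=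
  forall tau' : {set {set X}}, tau' \subset tau -> tau' != set0 ->
    #|tau'| + 1 <= #|L tau'|.

Definition strict_total_order (lt : rel X) : Prop :=
  irreflexive lt /\ transitive lt /\ (forall x y, x != y -> lt x y || lt y x).

(* total-order flexible: for every choice of orientation of each pair
   {x,y} in tau (encoded by f s = the element chosen to be smaller), there is
   a total order on X agreeing with all the chosen relations. *)
Definition total_order_flexible (tau : {set {set X}}) : Prop :=
  forall f : {set X} -> X, (forall s, s \in tau -> f s \in s) ->
    exists lt : rel X, strict_total_order lt /\
      (forall s, s \in tau -> forall y, y \in s -> y != f s -> lt (f s) y).

End Defs.

(* Viewing tau as a graph on X, thinness says that tau is a forest, i.e. that
   every non-empty subgraph has a leaf.  Removing a leaf edge shows by
   induction that forests are thin, and that they are flexible: rank the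
   vertices compatibly with the orientation, putting the leaf below or above
   everything else.  Conversely, every graph has an orientation whose sources
   are leaves.  In a graph without leaves every vertex is then the head of an
   edge, so there are at least as many edges as vertices, against thinness;
   and the least vertex of a compatible total order would be a source,
   against flexibility. *)

From mathcomp Require Import all_boot all_order.

Set Implicit Arguments. Unset Strict Implicit. Unset Printing Implicit Defensive.

Import Order.TTheory.

Section Forests.
Variable X : finType.
Implicit Types (sg tau : {set {set X}}) (s : {set X}) (f : {set X} -> X) (x r : X).

Definition deg sg x := #|[set s in sg | x \in s]|.

(* Orienting each edge [s] away from [f s], these are the vertices with an incoming edge. *)
Definition heads sg f := \bigcup_(s in sg) (s :\ f s).

Definition leafy tau :=
  forall tau', tau' \subset tau -> tau' != set0 -> exists x, deg tau' x = 1.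

Lemma LP sg x : reflect (exists2 s, s \in sg & x \in s) (x \in L sg).
Proof. exact: bigcupP. Qed.

Lemma subset_L sg s : s \in sg -> s \subset L sg.
Proof. exact: bigcup_sup. Qed.

Lemma L_subset sg1 sg2 : sg1 \subset sg2 -> L sg1 \subset L sg2.
Proof. by move=> sub; apply/bigcupsP => s /(subsetP sub)/subset_L. Qed.

Lemma pairs_subset sg1 sg2 : sg1 \subset sg2 -> pairs sg2 -> pairs sg1.
Proof. by move=> sub pairs2 s /(subsetP sub)/pairs2. Qed.

Lemma pairE s a : #|s| = 2 -> a \in s -> exists2 b, b != a & s = [set a; b].
Proof.
move/eqP/cards2P => [u [v [uv ->]]]; rewrite !inE => /orP[] /eqP ->.
  by exists v; rewrite // eq_sym.
by exists u; rewrite // setUC.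
Qed.

Lemma exists_in_L sg : pairs sg -> sg != set0 -> exists x, x \in L sg.
Proof.
move=> pairs_sg /set0Pn[s sg_s]; have /card_gt0P[x s_x] : 0 < #|s| by rewrite pairs_sg.
by exists x; apply/LP; exists s.
Qed.

Lemma deg_gt0 sg x : (0 < deg sg x) = (x \in L sg).
Proof.
apply/card_gt0P/LP => [[s]|[s sg_s x_s]]; first by rewrite inE => /andP[]; exists s.
by exists s; rewrite inE sg_s.
Qed.

Lemma deg_setD1 sg s0 x : s0 \in sg -> deg sg x = (x \in s0) + deg (sg :\ s0) x.
Proof.
move=> sg_s0; rewrite /deg (cardsD1 s0) inE sg_s0; congr (_ + _).
by apply: eq_card => s; rewrite !inE andbA.
Qed.

Lemma deg1_edge sg x :
  deg sg x = 1 -> exists s0, [/\ s0 \in sg, x \in s0 & x \notin L (sg :\ s0)].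
Proof.
move=> deg_x; have /LP[s0 sg_s0 s0_x] : x \in L sg by rewrite -deg_gt0 deg_x.
exists s0; split=> //; rewrite -deg_gt0.
by move: deg_x; rewrite (deg_setD1 x sg_s0) s0_x add1n => -[->].
Qed.

Lemma card_bigcup_le (I : finType) (P : pred I) (F : I -> {set X}) :
  #|\bigcup_(i | P i) F i| <= \sum_(i | P i) #|F i|.
Proof.
elim/big_ind2: _ => [|m A n B le_A le_B|//]; first by rewrite cards0.
exact: leq_trans (leq_card_setU A B) (leq_add le_A le_B).
Qed.

Lemma card_heads sg f :
  pairs sg -> {in sg, forall s, f s \in s} -> #|heads sg f| <= #|sg|.
Proof.
move=> pairs_sg f_in; rewrite (leq_trans (card_bigcup_le _ _)) // -sum1_card.
apply: leq_sum => s sg_s.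
by move: (cardsD1 (f s) s); rewrite f_in // pairs_sg // add1n => -[<-].
Qed.

Lemma heads_subset sg1 sg2 f1 f2 :
  sg1 \subset sg2 -> {in sg1, f1 =1 f2} -> heads sg1 f1 \subset heads sg2 f2.
Proof.
move=> sub f12; apply/bigcupsP => s sg1_s; rewrite f12 //.
exact: bigcup_sup (subsetP sub _ sg1_s).
Qed.

Lemma orientation_sources_leaves sg r : pairs sg ->
  exists2 f, {in sg, forall s, f s \in s} &
    {in L sg, forall x, x \notin heads sg f -> x != r /\ deg sg x = 1}.
Proof.
(* Orient an edge {a, u} at the root as u -> a and recurse with root u: only
   the degree of u drops, and u is a source only if it became isolated. *)
elim: {sg}_.+1 {-2}sg (ltnSn #|sg|) r => // n IH sg lt_sg_n r pairs_sg.
have [-> | /set0Pn[t sg_t]] := eqVneq sg set0.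
  by exists (fun=> r) => [s|x]; rewrite ?inE // /L big_set0 inE.
have [s1 [a [sg_s1 s1_a a_r]]] :
    exists s1 a, [/\ s1 \in sg, a \in s1 & r \in L sg -> a = r].
  have [/LP[s1 sg_s1 s1_r] | r_notin] := boolP (r \in L sg); first by exists s1, r.
  have /card_gt0P[a t_a] : 0 < #|t| by rewrite pairs_sg.
  by exists t, a; split=> // /(negP r_notin).
have [u u_a s1E] := pairE (pairs_sg _ sg_s1) s1_a.
have [||f' f'_in f'_src] := IH (sg :\ s1) _ u.
- by move: lt_sg_n; rewrite (cardsD1 s1) sg_s1 add1n ltnS.
- exact: pairs_subset (subD1set _ _) pairs_sg.
pose f s := if s == s1 then u else f' s.
have heads_f' : heads (sg :\ s1) f' \subset heads sg f.
  by apply: heads_subset (subD1set _ _) _ => s; rewrite !inE /f => /andP[/negbTE ->].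
exists f => [s sg_s | x L_x x_src].
  rewrite /f; case: eqVneq => [->|s_s1]; first by rewrite s1E !inE eqxx orbT.
  by apply: f'_in; rewrite !inE s_s1.
have x_a : x != a.
  apply: contraNneq x_src => ->; apply/bigcupP; exists s1 => //.
  by rewrite /f eqxx s1E !inE eqxx eq_sym u_a.
split; first by apply: contraNneq x_a => x_r; rewrite x_r a_r // -x_r.
have x_s1 : (x \in s1) = (x == u) by rewrite s1E !inE (negbTE x_a).
move: L_x; rewrite -deg_gt0 (deg_setD1 x sg_s1) x_s1.
have [L'_x | L'_nx] := boolP (x \in L (sg :\ s1)).
  by have [/negbTE -> ->] := f'_src x L'_x (contraNN (subsetP heads_f' x) x_src).
by move: L'_nx; rewrite -deg_gt0 -eqn0Ngt => /eqP ->; case: (x == u).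
Qed.

Lemma exists_minimal (lt : rel X) (A : {set X}) :
  irreflexive lt -> transitive lt -> A != set0 ->
  exists2 m, m \in A & forall y, y \in A -> ~~ lt y m.
Proof.
move=> irr tr /set0Pn[a A_a].
pose below x := [set y in A | lt y x].
have [m A_m m_min] := arg_minnP (fun x => #|below x|) A_a.
exists m => // y A_y; apply/negP => lt_ym.
have : below y \proper below m.
  apply/properP; split; last by exists y; rewrite !inE ?A_y ?lt_ym ?irr.
  by apply/subsetP => z; rewrite !inE => /andP[-> /tr ->].
by move/proper_card; rewrite ltnNge m_min.
Qed.

Lemma strict_total_order_key d (T : orderType d) (k : X -> T) :
  injective k -> strict_total_order [rel a b | (k a < k b)%O].
Proof.
move=> k_inj; split=> [a|]; first by rewrite /= ltxx.
split=> [b a c|a b]; first exact: lt_trans.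
by rewrite /= -neq_lt (inj_eq k_inj).
Qed.

Lemma strict_total_order_of_rank (rk : X -> nat) :
  exists2 lt : rel X, strict_total_order lt & forall a b, rk a < rk b -> lt a b.
Proof.
pose k a : nat *l nat := (rk a, val (enum_rank a)).
exists [rel a b | (k a < k b)%O].
  by apply: strict_total_order_key => a b [_ /val_inj/enum_rank_inj].
move=> a b lt_ab; rewrite /= ltxi_pair; apply/andP; split; first exact: ltnW.
by apply/implyP => /(leq_trans lt_ab); rewrite ltnn.
Qed.

Lemma leafy_rank tau f : pairs tau -> leafy tau -> {in tau, forall s, f s \in s} ->
  forall tau', tau' \subset tau -> exists rk : X -> nat,
    forall s y, s \in tau' -> y \in s :\ f s -> rk (f s) < rk y.
Proof.
move=> pairs_tau leafy_tau f_in tau'.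
elim: {tau'}_.+1 {-2}tau' (ltnSn #|tau'|) => // n IH tau' lt_tau'_n sub.
have [-> | ne] := eqVneq tau' set0; first by exists (fun=> 0) => s y; rewrite inE.
have [x /deg1_edge[s0 [tau'_s0 s0_x x_notin]]] := leafy_tau _ sub ne.
have [||rk rk_mono] := IH (tau' :\ s0).
- by move: lt_tau'_n; rewrite (cardsD1 s0) tau'_s0 add1n ltnS.
- exact: subset_trans (subD1set _ _) sub.
pose top := (\max_z rk z).+2.
exists (fun z => if z == x then (if f s0 == x then 0 else top) else (rk z).+1).
move=> s y tau'_s; rewrite !inE => /andP[y_fs s_y].
have tau_s := subsetP sub _ tau'_s.
have [s_s0 | s_s0] := eqVneq s s0.
  move: s_y y_fs (f_in _ tau_s); rewrite s_s0.
  have [v v_x ->] := pairE (pairs_tau _ (subsetP sub _ tau'_s0)) s0_x.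
  rewrite !inE => y_xv y_fs /orP[] /eqP fs0E; rewrite fs0E ?eqxx in y_fs *.
    by rewrite (negbTE y_fs).
  have /eqP-> : y == x by move: y_xv; rewrite (negbTE y_fs) orbF.
  by rewrite eqxx (negbTE v_x) !ltnS leq_bigmax.
have x_s : x \notin s.
  by apply: contraNN x_notin => x_s; apply/LP; exists s; rewrite ?inE ?s_s0.
rewrite (negbTE (contraNneq _ x_s : f s != x)); last by move=> <-; apply: f_in.
rewrite (negbTE (contraNneq _ x_s : y != x)); last by move=> <-.
by rewrite ltnS rk_mono // !inE ?y_fs ?s_s0.
Qed.

Lemma leafy_flexible tau : pairs tau -> leafy tau -> total_order_flexible tau.
Proof.
move=> pairs_tau leafy_tau f f_in.
have [rk rk_mono] := leafy_rank pairs_tau leafy_tau f_in (subxx tau).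
have [lt lt_order lt_rk] := strict_total_order_of_rank rk.
by exists lt; split=> // s tau_s y s_y y_fs; apply/lt_rk/rk_mono; rewrite ?inE ?y_fs.
Qed.

Lemma leafy_thin tau : pairs tau -> leafy tau -> thin tau.
Proof.
move=> pairs_tau leafy_tau tau'.
elim: {tau'}_.+1 {-2}tau' (ltnSn #|tau'|) => // n IH tau' lt_tau'_n sub ne.
have [x /deg1_edge[s0 [tau'_s0 s0_x x_notin]]] := leafy_tau _ sub ne.
have card_tau' : #|tau'| = #|tau' :\ s0| + 1 by rewrite (cardsD1 s0) tau'_s0 addnC.
have [e | ne'] := eqVneq (tau' :\ s0) set0.
  rewrite card_tau' e cards0 add0n addn1 -(pairs_tau _ (subsetP sub _ tau'_s0)).
  exact: subset_leq_card (subset_L tau'_s0).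
have L_sub : L (tau' :\ s0) \subset L tau' :\ x by rewrite subsetD1 L_subset ?subD1set.
have lt_n : #|tau' :\ s0| < n by move: lt_tau'_n; rewrite card_tau' addn1 ltnS.
have := IH _ lt_n (subset_trans (subD1set _ _) sub) ne'.
move/leq_trans/(_ (subset_leq_card L_sub)).
rewrite card_tau' (cardsD1 x (L tau')) (subsetP (subset_L tau'_s0) _ s0_x).
by rewrite add1n !addn1 ltnS.
Qed.

Lemma thin_leafy tau : pairs tau -> thin tau -> leafy tau.
Proof.
move=> pairs_tau thin_tau tau' sub ne.
have pairs_tau' := pairs_subset sub pairs_tau.
have [r _] := exists_in_L pairs_tau' ne.
have [f f_in f_src] := orientation_sources_leaves r pairs_tau'.
have [L_heads | /subsetPn[x L_x x_src]] := boolP (L tau' \subset heads tau' f).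
  have := leq_trans (subset_leq_card L_heads) (card_heads pairs_tau' f_in).
  by move/(leq_trans (thin_tau _ sub ne)); rewrite addn1 ltnn.
by exists x; have [] := f_src x L_x x_src.
Qed.

Lemma flexible_leafy tau : pairs tau -> total_order_flexible tau -> leafy tau.
Proof.
move=> pairs_tau flex_tau tau' sub ne.
have pairs_tau' := pairs_subset sub pairs_tau.
have [r L_r] := exists_in_L pairs_tau' ne.
have [f f_in f_src] := orientation_sources_leaves r pairs_tau'.
have [f0 f0_in _] := orientation_sources_leaves r pairs_tau.
pose g s := if s \in tau' then f s else f0 s.
have [|lt [[irr [tr _]] lt_g]] := flex_tau g.
  by move=> s tau_s; rewrite /g; case: ifP => [/f_in | _] //; apply: f0_in.
have [|m L_m m_min] := exists_minimal irr tr (A := L tau').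
  by apply/set0Pn; exists r.
suff m_src : m \notin heads tau' f by exists m; have [] := f_src m L_m m_src.
apply/bigcupP => -[s tau'_s]; rewrite !inE => /andP[m_fs s_m].
have := lt_g s (subsetP sub _ tau'_s) m s_m; rewrite /g tau'_s => /(_ m_fs).
by apply/negP/m_min/LP; exists s; last exact: f_in.
Qed.

End Forests.

Theorem theorem3 (X : finType) (tau : {set {set X}}) :
  pairs tau -> tau != set0 -> (thin tau <-> total_order_flexible tau).
Proof.
move=> pairs_tau _; split=> [thin_tau | flex_tau].
  exact/leafy_flexible/thin_leafy.
exact/leafy_thin/flexible_leafy.
Qed.
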